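(* Let $|\psi\rangle\in H_A\otimes H_B$ be a unit vector in a finite-dimensional bipartite Hilbert space, $\rho=|\psi\rangle\langle\psi|$, and $\rho_A=\mathrm{Tr}_B\rho$, $\rho_B=\mathrm{Tr}_A\rho$. For density operators $\rho,\sigma$ define $D_2(\rho,\sigma)=\sqrt{2-2\,\mathrm{Tr}(\rho^{1/2}\sigma^{1/2})}$. Then $$D_2(\rho,\rho_A\otimes\rho_B)=C(\rho),\qquad\text{where } C(\rho)=\sqrt{2-2\,\mathrm{Tr}(\rho_A^2)}.$$
   Context: $\rho^{1/2}$ denotes the positive square root of a positive semidefinite operator. $C(\rho)$ is the concurrence of the pure state $\rho$. *)

(* Complex scalars: an arbitrary numClosedFieldType C
   (e.g. complex R for R : rcfType, or algC). *)
From HB Require Import structures.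
From mathcomp Require Import all_boot all_order all_algebra.
From mathcomp Require Import mxtens.
From Stdlib Require Import ClassicalEpsilon.
Set Implicit Arguments. Unset Strict Implicit. Unset Printing Implicit Defensive.
Import Order.TTheory GRing.Theory Num.Theory.
Local Open Scope ring_scope.

Definition adjmx (C : numClosedFieldType) m n (A : 'M[C]_(m, n)) : 'M[C]_(n, m) :=
  map_mx Num.conj A^T.

Definition psdmx (C : numClosedFieldType) n (A : 'M[C]_n) : Prop :=
  adjmx A = A /\ forall x : 'cV[C]_n, 0 <= (adjmx x *m A *m x) 0 0.

Definition psd_sqrtmx (C : numClosedFieldType) n (A : 'M[C]_n) : 'M[C]_n :=
  epsilon (inhabits 0) (fun S => psdmx S /\ S *m S = A).

(* partial traces on H_A (x) H_B = C^m (x) C^n, indices via mxtens_index,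
   consistent with the Kronecker product tensmx ( *t ) *)
Definition ptraceB (C : numClosedFieldType) m n (rho : 'M[C]_(m * n)) : 'M[C]_m :=
  \matrix_(i, i') \sum_(j < n) rho (mxtens_index (i, j)) (mxtens_index (i', j)).
Definition ptraceA (C : numClosedFieldType) m n (rho : 'M[C]_(m * n)) : 'M[C]_n :=
  \matrix_(j, j') \sum_(i < m) rho (mxtens_index (i, j)) (mxtens_index (i, j')).

Definition D2 (C : numClosedFieldType) n (rho sigma : 'M[C]_n) : C :=
  sqrtC (2 - 2 * \tr (psd_sqrtmx rho *m psd_sqrtmx sigma)).

Definition concurrence (C : numClosedFieldType) m n (rho : 'M[C]_(m * n)) : C :=
  sqrtC (2 - 2 * \tr (ptraceB rho *m ptraceB rho)).

From HB Require Import structures.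
From mathcomp Require Import all_boot all_order all_algebra.
From mathcomp Require Import mxtens spectral.
From Stdlib Require Import ClassicalEpsilon.
Set Implicit Arguments. Unset Strict Implicit. Unset Printing Implicit Defensive.
Import Order.TTheory GRing.Theory Num.Theory.
Local Open Scope ring_scope.

(* Write psi = vec M for an m x n matrix M; then rho_A = M M^H and
   rho_B = (M^H M)^T.  As rho is a projection, rho^{1/2} = rho, and
   (rho_A (x) rho_B)^{1/2} = (M M^H)^{1/2} (x) ((M^H M)^{1/2})^T, so
   Tr(rho^{1/2} (rho_A (x) rho_B)^{1/2}) = Tr(M^H (M M^H)^{1/2} M (M^H M)^{1/2}).
   Square roots of PSD matrices intertwine whenever their squares do; from
   (M M^H) M = M (M^H M) we get (M M^H)^{1/2} M = M (M^H M)^{1/2}, and the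
   trace collapses to Tr(M^H M M^H M) = Tr(rho_A^2).  The intertwining
   (which, applied to the identity, is uniqueness of PSD square roots) is
   read off spectral decompositions: if s_i^2 N_ij = N_ij t_j^2 with s, t >= 0, then
   s_i N_ij = N_ij t_j. *)

Section Adjoint.
Variable C : numClosedFieldType.

Lemma adjmxK m n (A : 'M[C]_(m, n)) : adjmx (adjmx A) = A.
Proof. by apply/matrixP => i j; rewrite !mxE conjCK. Qed.

Lemma adjmxM m n p (A : 'M[C]_(m, n)) (B : 'M[C]_(n, p)) :
  adjmx (A *m B) = adjmx B *m adjmx A.
Proof. by rewrite /adjmx trmx_mul map_mxM. Qed.

Lemma adjmx_tr m n (A : 'M[C]_(m, n)) : adjmx A^T = (adjmx A)^T.
Proof. by rewrite /adjmx map_trmx. Qed.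

Lemma adjmx_tens m n p q (A : 'M[C]_(m, n)) (B : 'M[C]_(p, q)) :
  adjmx (A *t B) = adjmx A *t adjmx B.
Proof. by apply/matrixP => i j; rewrite !mxE rmorphM. Qed.

End Adjoint.

Section Tensor.
Variable R : comPzRingType.

Lemma sum_mxtens m n (F : 'I_(m * n) -> R) :
  \sum_k F k = \sum_i \sum_j F (mxtens_index (i, j)).
Proof.
rewrite pair_big /= (reindex (@mxtens_index m n)) /=; first by apply: eq_bigr => -[].
by exists (@mxtens_unindex m n) => x _; rewrite ?mxtens_indexK ?mxtens_unindexK.
Qed.

Lemma tens_diag_mx m n (d : 'rV[R]_m) (e : 'rV[R]_n) :
  diag_mx d *t diag_mx e =
  diag_mx (\row_k (d 0 (mxtens_unindex k).1 * e 0 (mxtens_unindex k).2)).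
Proof.
apply/matrixP => k l; case: (mxtens_indexP k) => i j; case: (mxtens_indexP l) => i' j'.
rewrite tensmxE !mxE mxtens_indexK (inj_eq (can_inj (@mxtens_indexK m n))) xpair_eqE.
by case: (i =P i') => _; case: (j =P j') => _; rewrite ?mulr1n ?mulr0n ?mulr0 ?mul0r.
Qed.

Definition vecmx m n (M : 'M[R]_(m, n)) : 'cV[R]_(m * n) :=
  \col_k M (mxtens_unindex k).1 (mxtens_unindex k).2.

Lemma vecmxE m n (M : 'M[R]_(m, n)) i j : vecmx M (mxtens_index (i, j)) 0 = M i j.
Proof. by rewrite mxE mxtens_indexK. Qed.

Lemma vecmx_onto m n (u : 'cV[R]_(m * n)) : exists M : 'M_(m, n), u = vecmx M.
Proof.
exists (\matrix_(i, j) u (mxtens_index (i, j)) 0).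
by apply/colP => k; case: (mxtens_indexP k) => i j; rewrite vecmxE mxE.
Qed.

Lemma tens_mulmx_vecmx m n p q (X : 'M[R]_(p, m)) (Y : 'M[R]_(q, n)) (M : 'M[R]_(m, n)) :
  (X *t Y) *m vecmx M = vecmx (X *m M *m Y^T).
Proof.
apply/colP => k; case: (mxtens_indexP k) => i j.
rewrite vecmxE mxE sum_mxtens mxE exchange_big; apply: eq_bigr => j' _.
rewrite mxE mulr_suml; apply: eq_bigr => i' _.
by rewrite tensmxE vecmxE !mxE mulrAC.
Qed.

End Tensor.

Section PositiveSemidefinite.
Variable C : numClosedFieldType.

Lemma psdmx_conj k n (A : 'M[C]_n) (Q : 'M[C]_(k, n)) :
  psdmx A -> psdmx (Q *m A *m adjmx Q).
Proof.
move=> [hA fA]; split; first by rewrite !adjmxM adjmxK hA mulmxA.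
by move=> x; have := fA (adjmx Q *m x); rewrite adjmxM adjmxK !mulmxA.
Qed.

Lemma psdmx_gram m n (X : 'M[C]_(m, n)) : psdmx (X *m adjmx X).
Proof.
split; first by rewrite adjmxM adjmxK.
move=> x; rewrite mulmxA -mulmxA -[adjmx x *m X]adjmxK adjmxM adjmxK !mxE.
by apply: sumr_ge0 => i _; rewrite !mxE mulrC mul_conjC_ge0.
Qed.

Lemma psdmx_tr n (A : 'M[C]_n) : psdmx A -> psdmx A^T.
Proof.
move=> [hA fA]; split; first by rewrite adjmx_tr hA.
move=> x; have := fA (adjmx x)^T.
suff -> : adjmx (adjmx x)^T *m A *m (adjmx x)^T = (adjmx x *m A^T *m x)^T.
  by rewrite mxE.
by rewrite adjmx_tr adjmxK !trmx_mul !trmxK mulmxA.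
Qed.

Lemma psdmx_diag_ge0 n (A : 'M[C]_n) i : psdmx A -> 0 <= A i i.
Proof.
case=> _ /(_ (delta_mx i 0)); rewrite -mulmxA -colE.
have -> : adjmx (delta_mx i 0) = delta_mx 0 i :> 'M[C]_(1, n).
  by apply/matrixP => a b; rewrite /adjmx !mxE conjC_nat andbC.
by rewrite -rowE !mxE.
Qed.

Lemma psdmx_diag_conj k n (Q : 'M[C]_(n, k)) (d : 'rV[C]_n) :
  (forall i, 0 <= d 0 i) -> psdmx (adjmx Q *m diag_mx d *m Q).
Proof.
move=> d0; rewrite -{2}[Q]adjmxK; apply: psdmx_conj; split.
  apply/matrixP => i j; rewrite !mxE eq_sym.
  by case: eqP => [->|_]; rewrite ?mulr1n ?geC0_conj ?mulr0n ?rmorph0.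
move=> x; rewrite mul_mx_diag !mxE; apply: sumr_ge0 => i _; rewrite !mxE.
by rewrite mulrAC mulr_ge0 // mulrC mul_conjC_ge0.
Qed.

Lemma psdmx_spectral n (A : 'M[C]_n) : psdmx A ->
  exists P (d : 'rV[C]_n), [/\ P *m adjmx P = 1%:M, adjmx P *m P = 1%:M,
    (forall i, 0 <= d 0 i) & A = adjmx P *m diag_mx d *m P].
Proof.
move=> pA; have nA : A \is normalmx.
  by apply/normalmxP; have := pA.1; rewrite /adjmx => ->.
have uP := unitarymxP (spectral_unitarymx A).
move: (orthomx_spectralP nA); rewrite invmx_unitary ?spectral_unitarymx //.
set P := spectralmx A in uP *; set d := spectral_diag A => eA.
exists P, d; split => //; first exact: mulmx1C.
move=> i; have eD : diag_mx d = P *m A *m adjmx P.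
  by rewrite eA !mulmxA uP mul1mx -mulmxA uP mulmx1.
have := psdmx_diag_ge0 i (psdmx_conj P pA).
by rewrite -eD mxE eqxx mulr1n.
Qed.

End PositiveSemidefinite.

Section SquareRoot.
Variable C : numClosedFieldType.

Lemma diag_mx_sqr_intertwine n m (s : 'rV[C]_n) (t : 'rV[C]_m) (N : 'M[C]_(n, m)) :
  (forall i, 0 <= s 0 i) -> (forall j, 0 <= t 0 j) ->
  diag_mx s *m diag_mx s *m N = N *m diag_mx t *m diag_mx t ->
  diag_mx s *m N = N *m diag_mx t.
Proof.
move=> s0 t0 /matrixP eN; apply/matrixP => i j; move: (eN i j).
rewrite -!mulmxA mulmx_diag !mul_diag_mx !mul_mx_diag !mxE.
have [->|nz] := eqVneq (N i j) 0; first by rewrite !(mulr0, mul0r).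
move=> h; suff -> : s 0 i = t 0 j by rewrite mulrC.
apply/eqP; rewrite -(@eqrXn2 _ 2) //; apply/eqP/(mulIf nz).
by rewrite !expr2 -mulrA h mulrC.
Qed.

Lemma unitary_conjK n m (P : 'M[C]_n) (Q : 'M[C]_m) (Y : 'M[C]_(n, m)) :
  P *m adjmx P = 1%:M -> Q *m adjmx Q = 1%:M ->
  P *m (adjmx P *m Y *m Q) *m adjmx Q = Y.
Proof. by move=> uP uQ; rewrite !mulmxA uP mul1mx -mulmxA uQ mulmx1. Qed.

Lemma psdmx_sqr_intertwine n m (S : 'M[C]_n) (T : 'M[C]_m) (X : 'M[C]_(n, m)) :
  psdmx S -> psdmx T -> S *m S *m X = X *m (T *m T) -> S *m X = X *m T.
Proof.
move=> /psdmx_spectral[P [s [uP uP' s0 ->]]] /psdmx_spectral[Q [t [uQ uQ' t0 ->]]].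
have -> : X = adjmx P *m (P *m X *m adjmx Q) *m Q.
  by rewrite !mulmxA uP' mul1mx -mulmxA uQ' mulmx1.
move: (P *m X *m adjmx Q) => N.
rewrite !mulmxA -!(mulmxA _ P (adjmx P)) -!(mulmxA _ Q (adjmx Q)) uP uQ !mulmx1.
move=> eX; have eN : diag_mx s *m diag_mx s *m N = N *m diag_mx t *m diag_mx t.
  rewrite -(unitary_conjK (diag_mx s *m _ *m N) uP uQ).
  rewrite -(unitary_conjK (N *m _ *m diag_mx t) uP uQ).
  by congr (_ *m _ *m _); rewrite !mulmxA.
by rewrite -[adjmx P *m _ *m N]mulmxA (diag_mx_sqr_intertwine s0 t0 eN) mulmxA.
Qed.

Lemma psd_sqrtmx_eq n (A S : 'M[C]_n) :
  psdmx S -> S *m S = A -> psd_sqrtmx A = S.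
Proof.
move=> pS eS; have [pR eR] := epsilon_spec (inhabits 0)
  (fun R => psdmx R /\ R *m R = A) (ex_intro _ S (conj pS eS)).
have := @psdmx_sqr_intertwine _ _ _ _ 1%:M pR pS.
by rewrite !mulmx1 !mul1mx eR eS; apply.
Qed.

Lemma psd_sqrtmxP n (A : 'M[C]_n) :
  psdmx A -> psdmx (psd_sqrtmx A) /\ psd_sqrtmx A *m psd_sqrtmx A = A.
Proof.
move=> /psdmx_spectral[P [a [uP _ a0 ->]]].
set S := adjmx P *m diag_mx (map_mx sqrtC a) *m P.
have pS : psdmx S by apply: psdmx_diag_conj => i; rewrite mxE sqrtC_ge0.
suff eS : S *m S = adjmx P *m diag_mx a *m P by rewrite (psd_sqrtmx_eq pS eS).
rewrite /S -!mulmxA [P *m (adjmx P *m _)]mulmxA uP mul1mx.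
rewrite [_ *m (_ *m P)]mulmxA mulmx_diag.
by congr (_ *m (diag_mx _ *m _)); apply/rowP => i; rewrite !mxE -expr2 sqrtCK.
Qed.

Lemma psd_sqrtmx_intertwine n m (A : 'M[C]_n) (B : 'M[C]_m) (X : 'M[C]_(n, m)) :
  psdmx A -> psdmx B -> A *m X = X *m B ->
  psd_sqrtmx A *m X = X *m psd_sqrtmx B.
Proof.
move=> /psd_sqrtmxP[pSA eSA] /psd_sqrtmxP[pSB eSB] eX.
by apply: psdmx_sqr_intertwine; rewrite ?eSA ?eSB.
Qed.

Lemma psdmx_tens n m (A : 'M[C]_n) (B : 'M[C]_m) :
  psdmx A -> psdmx B -> psdmx (A *t B).
Proof.
move=> /psdmx_spectral[P [a [_ _ a0 ->]]] /psdmx_spectral[Q [b [_ _ b0 ->]]].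
rewrite -!tensmx_mul -adjmx_tens tens_diag_mx; apply: psdmx_diag_conj => k; rewrite mxE; exact: mulr_ge0.
Qed.

Lemma psd_sqrtmx_tens n m (A : 'M[C]_n) (B : 'M[C]_m) :
  psdmx A -> psdmx B -> psd_sqrtmx (A *t B) = psd_sqrtmx A *t psd_sqrtmx B.
Proof.
move=> /psd_sqrtmxP[pSA eSA] /psd_sqrtmxP[pSB eSB].
by apply: psd_sqrtmx_eq; [exact: psdmx_tens | rewrite tensmx_mul eSA eSB].
Qed.

Lemma psd_sqrtmx_tr n (A : 'M[C]_n) :
  psdmx A -> psd_sqrtmx A^T = (psd_sqrtmx A)^T.
Proof.
move=> /psd_sqrtmxP[pS eS].
by apply: psd_sqrtmx_eq; [exact: psdmx_tr | rewrite -trmx_mul eS].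
Qed.

End SquareRoot.

Section PurePartialTrace.
Variable C : numClosedFieldType.

Lemma mxtrace_vecmx m n (M N : 'M[C]_(m, n)) :
  \tr (adjmx (vecmx M) *m vecmx N) = \tr (adjmx M *m N).
Proof.
rewrite /mxtrace big_ord1 mxE sum_mxtens exchange_big; apply: eq_bigr => j _.
by rewrite mxE; apply: eq_bigr => i _; rewrite !mxE mxtens_indexK.
Qed.

Lemma ptraceB_vecmx m n (M : 'M[C]_(m, n)) :
  ptraceB (vecmx M *m adjmx (vecmx M)) = M *m adjmx M.
Proof.
apply/matrixP => i i'; rewrite !mxE; apply: eq_bigr => j _.
by rewrite !mxE big_ord1 !mxE !mxtens_indexK.
Qed.

Lemma ptraceA_vecmx m n (M : 'M[C]_(m, n)) :
  ptraceA (vecmx M *m adjmx (vecmx M)) = (adjmx M *m M)^T.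
Proof.
apply/matrixP => j j'; rewrite !mxE; apply: eq_bigr => i _.
by rewrite !mxE big_ord1 !mxE !mxtens_indexK mulrC.
Qed.

End PurePartialTrace.

Theorem mainTheorem3 (C : numClosedFieldType) (m n : nat)
    (psi : 'cV[C]_(m * n)) :
  adjmx psi *m psi = 1%:M ->
  let rho := psi *m adjmx psi in
  D2 rho (ptraceB rho *t ptraceA rho) = concurrence rho.
Proof.
move=> unit_psi rho.
have [M epsi] := vecmx_onto psi.
have pA : psdmx (M *m adjmx M) := psdmx_gram M.
have pB : psdmx (adjmx M *m M) by have := psdmx_gram (adjmx M); rewrite adjmxK.
have sqrt_rho : psd_sqrtmx rho = rho.
  apply: psd_sqrtmx_eq; first exact: psdmx_gram.
  by rewrite /rho mulmxA -(mulmxA psi) unit_psi mulmx1.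
have [_ eSB] := psd_sqrtmxP pB.
have intertwine := psd_sqrtmx_intertwine pA pB (esym (mulmxA M (adjmx M) M)).
rewrite /D2 /concurrence sqrt_rho /rho epsi ptraceB_vecmx ptraceA_vecmx.
rewrite psd_sqrtmx_tens ?psd_sqrtmx_tr //; last exact: psdmx_tr.
congr (sqrtC (2 - 2 * _)).
rewrite -mulmxA mxtrace_mulC -[adjmx _ *m _ *m vecmx M]mulmxA.
rewrite tens_mulmx_vecmx trmxK mxtrace_vecmx.
by rewrite intertwine -(mulmxA M) eSB mxtrace_mulC !mulmxA.
Qed.
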